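(* Define, for $x\ge 0$, $$f(x):=\frac12\,\mathrm{Erfc}\Big(-\frac{x}{2\sqrt2}\Big)+\frac12\,e^{3x^2}\,\mathrm{Erfc}\Big(\frac{5x}{2\sqrt2}\Big).$$ Then for all $x\ge 0$, $$f(x)\ge N\Big(\frac1{\sqrt5}\Big)+\frac1{12}\sqrt{\frac{10}{\pi}}\,e^{-1/10}\ (\approx 0.8072).$$
   Context: $\mathrm{Erfc}(x):=\frac{2}{\sqrt\pi}\int_x^\infty e^{-v^2}dv$ for $x\in\mathbb{R}$, and $N(x):=\frac1{\sqrt{2\pi}}\int_{-\infty}^x e^{-v^2/2}dv$ is the standard normal distribution function. *)

From Stdlib Require Import Reals.
From Coquelicot Require Import Coquelicot.
Open Scope R_scope.

Definition Erfc (x : R) : R :=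
  2 / sqrt PI * RInt_gen (fun v => exp (- v ^ 2)) (at_point x) (Rbar_locally p_infty).

Definition Ncdf (x : R) : R :=
  1 / sqrt (2 * PI) * RInt_gen (fun v => exp (- v ^ 2 / 2)) (Rbar_locally m_infty) (at_point x).

Definition f3 (x : R) : R :=
  1/2 * Erfc (- x / (2 * sqrt 2)) + 1/2 * exp (3 * x ^ 2) * Erfc (5 * x / (2 * sqrt 2)).

(* Write T(z) = int_z^oo exp(-v^2) dv, a = x / (2 sqrt 2) and b = 1 / sqrt 10.  Then
   sqrt pi f(x) = T(-a) + exp(24 a^2) T(5 a) and sqrt pi N(1/sqrt 5) = T(-b).
   The rational function M(z) = (15 + 35 z + 30 z^2) / (20 + 60 z + 72 z^2 + 60 z^3)
   minorizes the Mills ratio exp(z^2) T(z) on z >= 0: exp(-z^2) M(z) vanishes at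
   infinity and its derivative is at least -exp(-z^2).  Hence
   sqrt pi (f(x) - N(1/sqrt 5)) >= G(a) := int_b^a exp(-v^2) dv + exp(-a^2) M(5 a).
   The derivative of G has the sign of a polynomial in 5 a whose only sign change on
   [0, oo) lies in [1.345, 1.355], so G is bounded below by its behaviour near
   a = 0.27, where a numerical estimate beats sqrt 10 / 12 * exp(-1/10). *)

From Stdlib Require Import Reals Lra Classical.
From Coquelicot Require Import Coquelicot.
Open Scope R_scope.

Lemma le_of_derive_nonneg (f df : R -> R) (p q : R) :
  p <= q ->
  (forall t, p <= t <= q -> is_derive f t (df t)) ->
  (forall t, p <= t <= q -> 0 <= df t) ->
  f p <= f q.
Proof.
  intros Hpq Hf Hdf.
  destruct (MVT_gen f p q df) as [c [Hc Hmvt]];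
    rewrite ?Rmin_left, ?Rmax_right in * by exact Hpq.
  - intros t Ht; apply Hf; lra.
  - intros t Ht; apply continuity_pt_filterlim.
    apply (ex_derive_continuous (K := R_AbsRing) (V := R_NormedModule)).
    eexists; apply Hf; lra.
  - pose proof (Hdf c Hc); nra.
Qed.

Lemma ge_of_derive_nonpos (f df : R -> R) (p q : R) :
  p <= q ->
  (forall t, p <= t <= q -> is_derive f t (df t)) ->
  (forall t, p <= t <= q -> df t <= 0) ->
  f q <= f p.
Proof.
  intros Hpq Hf Hdf.
  enough (- f p <= - f q) by lra.
  apply (le_of_derive_nonneg (fun t => - f t) (fun t => - df t)); try easy.
  - intros t Ht; apply (is_derive_opp (V := R_NormedModule) f); auto.
  - intros t Ht; specialize (Hdf t Ht); lra.
Qed.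

Lemma exp_le_exp (x y : R) : x <= y -> exp x <= exp y.
Proof.
  intros [Hlt | ->]; [now left; apply exp_increasing | apply Rle_refl].
Qed.

Lemma is_lim_pinfty_of_incr_bounded (F : R -> R) (z M : R) :
  (forall s t, z <= s <= t -> F s <= F t) ->
  (forall t, z <= t -> F t <= M) ->
  exists l : R, is_lim F p_infty l.
Proof.
  intros Hincr Hbnd.
  set (E := fun y => exists t, z <= t /\ y = F t).
  destruct (completeness E) as [l [Hub Hlub]].
  - exists M; intros y [t [Ht ->]]; auto.
  - exists (F z), z; split; [lra | reflexivity].
  - exists l; apply is_lim_spec; intros eps.
    assert (Hnear : exists t, z <= t /\ l - eps < F t).
    { apply NNPP; intros Hnone.
      assert (l <= l - eps).
      { apply Hlub; intros y [t [Ht ->]].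
        apply Rnot_lt_le; intros Hlt; apply Hnone; eauto. }
      pose proof (cond_pos eps); lra. }
    destruct Hnear as [t0 [Ht0 Hlt]].
    exists t0; intros t Ht.
    assert (F t0 <= F t) by (apply Hincr; lra).
    assert (F t <= l) by (apply Hub; exists t; split; [lra | reflexivity]).
    apply Rabs_lt_between'; lra.
Qed.

Lemma is_RInt_gen_at_point_pinfty (f : R -> R) (a l : R) :
  (forall b, ex_RInt f a b) ->
  is_lim (fun b => RInt f a b) p_infty l ->
  is_RInt_gen f (at_point a) (Rbar_locally p_infty) l.
Proof.
  intros Hf Hlim P HP.
  exists (fun x => x = a) (fun b => P (RInt f a b)); try easy.
  - exact (Hlim P HP).
  - intros x y -> Hy; exists (RInt f a y); split; [ | exact Hy].
    apply (RInt_correct (V := R_CompleteNormedModule)), Hf.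
Qed.

Lemma is_RInt_gen_minfty_at_point (f : R -> R) (b l : R) :
  (forall a, ex_RInt f a b) ->
  is_lim (fun a => RInt f a b) m_infty l ->
  is_RInt_gen f (Rbar_locally m_infty) (at_point b) l.
Proof.
  intros Hf Hlim P HP.
  exists (fun a => P (RInt f a b)) (fun x => x = b); try easy.
  - exact (Hlim P HP).
  - intros x y Hx ->; exists (RInt f x b); split; [ | exact Hx].
    apply (RInt_correct (V := R_CompleteNormedModule)), Hf.
Qed.

Definition gauss (v : R) : R := exp (- v ^ 2).

Lemma gauss_pos (v : R) : 0 < gauss v.
Proof. apply exp_pos. Qed.

Lemma continuous_gauss (v : R) : continuous gauss v.
Proof.
  apply (ex_derive_continuous (K := R_AbsRing) (V := R_NormedModule)).
  unfold gauss; auto_derive; easy.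
Qed.

Lemma ex_RInt_gauss (a b : R) : ex_RInt gauss a b.
Proof.
  apply (ex_RInt_continuous (V := R_CompleteNormedModule)); intros; apply continuous_gauss.
Qed.

Lemma RInt_gauss_Chasles (p q r : R) : RInt gauss p q + RInt gauss q r = RInt gauss p r.
Proof. apply (RInt_Chasles (V := R_CompleteNormedModule)); apply ex_RInt_gauss. Qed.

Lemma RInt_gauss_opp (p q : R) : RInt gauss (- q) (- p) = RInt gauss p q.
Proof.
  pose proof (RInt_comp_lin (V := R_CompleteNormedModule) gauss (-1) 0 p q
    (ex_RInt_gauss _ _)) as Hlin.
  replace (-1 * p + 0) with (- p) in Hlin by ring.
  replace (-1 * q + 0) with (- q) in Hlin by ring.
  rewrite <- (opp_RInt_swap (V := R_CompleteNormedModule)), <- Hlin by apply ex_RInt_gauss.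
  rewrite (RInt_ext (V := R_CompleteNormedModule) _ (fun y => scal (-1) (gauss y))).
  - rewrite (RInt_scal (V := R_CompleteNormedModule)) by apply ex_RInt_gauss.
    unfold opp, scal; simpl; unfold mult; simpl; ring.
  - intros y _; unfold gauss; do 3 f_equal; ring.
Qed.

Lemma is_derive_RInt_gauss (c t : R) : is_derive (fun s => RInt gauss c s) t (gauss t).
Proof.
  apply (is_derive_RInt gauss (fun s => RInt gauss c s) c); [ | apply continuous_gauss].
  apply filter_forall; intros s.
  apply (RInt_correct (V := R_CompleteNormedModule)), ex_RInt_gauss.
Qed.

Lemma RInt_gauss_plus_le (h dh : R -> R) (c p q : R) :
  p <= q ->
  (forall t, p <= t <= q -> is_derive h t (dh t)) ->
  (forall t, p <= t <= q -> 0 <= gauss t + dh t) ->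
  RInt gauss c p + h p <= RInt gauss c q + h q.
Proof.
  intros Hpq Hh Hdh.
  apply (le_of_derive_nonneg (fun s => RInt gauss c s + h s) (fun t => gauss t + dh t)); auto.
  intros t Ht; apply (is_derive_plus (V := R_NormedModule) (fun s => RInt gauss c s) h);
    [apply is_derive_RInt_gauss | auto].
Qed.

Lemma RInt_gauss_plus_ge (h dh : R -> R) (c p q : R) :
  p <= q ->
  (forall t, p <= t <= q -> is_derive h t (dh t)) ->
  (forall t, p <= t <= q -> gauss t + dh t <= 0) ->
  RInt gauss c q + h q <= RInt gauss c p + h p.
Proof.
  intros Hpq Hh Hdh.
  apply (ge_of_derive_nonpos (fun s => RInt gauss c s + h s) (fun t => gauss t + dh t)); auto.
  intros t Ht; apply (is_derive_plus (V := R_NormedModule) (fun s => RInt gauss c s) h);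
    [apply is_derive_RInt_gauss | auto].
Qed.

Lemma RInt_gauss_incr (c p q : R) : p <= q -> RInt gauss c p <= RInt gauss c q.
Proof.
  intros Hpq.
  pose proof (RInt_gauss_plus_le (fun _ => 0) (fun _ => 0) c p q Hpq) as H.
  enough (RInt gauss c p + 0 <= RInt gauss c q + 0) by lra.
  apply H.
  - intros t _; apply (is_derive_const (K := R_AbsRing) (V := R_NormedModule)).
  - intros t _; pose proof (gauss_pos t); lra.
Qed.

Lemma RInt_gauss_le_exp (z B : R) : z <= B -> RInt gauss z B <= exp (1 - 2 * z) / 2.
Proof.
  intros HzB.
  assert (H : RInt gauss z B + exp (1 - 2 * B) / 2 <= RInt gauss z z + exp (1 - 2 * z) / 2).
  { apply (RInt_gauss_plus_ge (fun t => exp (1 - 2 * t) / 2) (fun t => - exp (1 - 2 * t))); auto.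
    - intros t _; auto_derive; [easy |].
      replace (1 + - (2 * t)) with (1 - 2 * t) by ring; field.
    - intros t _; enough (gauss t <= exp (1 - 2 * t)) by lra.
      apply exp_le_exp; pose proof (pow2_ge_0 (t - 1)); nra. }
  rewrite RInt_point in H; unfold zero in H; simpl in H.
  pose proof (exp_pos (1 - 2 * B)); lra.
Qed.

Definition gauss_tail (z : R) : R := RInt_gen gauss (at_point z) (Rbar_locally p_infty).

Lemma Erfc_gauss_tail (z : R) : Erfc z = 2 / sqrt PI * gauss_tail z.
Proof. reflexivity. Qed.

Lemma is_lim_RInt_gauss (z : R) : is_lim (fun B => RInt gauss z B) p_infty (gauss_tail z).
Proof.
  destruct (is_lim_pinfty_of_incr_bounded (fun B => RInt gauss z B) z (exp (1 - 2 * z) / 2))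
    as [l Hl].
  - intros s t Hst; apply RInt_gauss_incr; lra.
  - intros t Ht; apply RInt_gauss_le_exp; lra.
  - unfold gauss_tail.
    rewrite (is_RInt_gen_unique (V := R_CompleteNormedModule) _ l); [exact Hl |].
    apply is_RInt_gen_at_point_pinfty; [apply ex_RInt_gauss | exact Hl].
Qed.

Lemma gauss_tail_Chasles (p q : R) : gauss_tail p = RInt gauss p q + gauss_tail q.
Proof.
  assert (H : is_lim (fun B => RInt gauss p B) p_infty (RInt gauss p q + gauss_tail q)).
  { apply (is_lim_ext (fun B => RInt gauss p q + RInt gauss q B));
      [intros; apply RInt_gauss_Chasles |].
    apply is_lim_plus'; [apply is_lim_const | apply is_lim_RInt_gauss]. }
  apply is_lim_unique in H; rewrite (is_lim_unique _ _ _ (is_lim_RInt_gauss p)) in H.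
  now injection H.
Qed.

Lemma is_lim_gauss : is_lim gauss p_infty 0.
Proof.
  apply (is_lim_comp exp (fun v => - v ^ 2) p_infty 0 m_infty).
  - apply is_lim_exp_m.
  - apply (is_lim_le_m_loc (fun v => - v)).
    + exists 1; intros v Hv; nra.
    + apply (is_lim_opp (fun v => v) p_infty p_infty), is_lim_id.
  - exists 0; intros v _; discriminate.
Qed.

Lemma gauss_tail_ge (h dh : R -> R) (z : R) :
  (forall t, z <= t -> is_derive h t (dh t)) ->
  (forall t, z <= t -> 0 <= gauss t + dh t) ->
  is_lim h p_infty 0 ->
  h z <= gauss_tail z.
Proof.
  intros Hh Hdh Hlim.
  assert (Hle : Rbar_le (h z) (gauss_tail z + 0)).
  { apply (is_lim_le_loc (fun _ => h z) (fun B => RInt gauss z B + h B) p_infty).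
    - exists z; intros B HB.
      replace (h z) with (RInt gauss z z + h z)
        by (rewrite RInt_point; unfold zero; simpl; ring).
      apply (RInt_gauss_plus_le h dh); [lra | intros; apply Hh | intros; apply Hdh]; lra.
    - apply is_lim_const.
    - apply is_lim_plus'; [apply is_lim_RInt_gauss | exact Hlim]. }
  simpl in Hle; lra.
Qed.

Definition mills_num (z : R) : R := 15 + 35 * z + 30 * z ^ 2.
Definition mills_den (z : R) : R := 20 + 60 * z + 72 * z ^ 2 + 60 * z ^ 3.
Definition mills (z : R) : R := mills_num z / mills_den z.

Definition mills_residual (z : R) : R :=
  200 + 840 * z - 140 * z ^ 2 - 720 * z ^ 3 + 144 * z ^ 4 + 120 * z ^ 5.

Lemma mills_den_pos (z : R) : 0 <= z -> 0 < mills_den z.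
Proof.
  intros Hz; unfold mills_den.
  pose proof (pow_le z 2 Hz); pose proof (pow_le z 3 Hz); lra.
Qed.

Lemma mills_bounds (z : R) : 0 <= z -> 0 <= mills z <= 1.
Proof.
  intros Hz; pose proof (mills_den_pos z Hz) as Hden; unfold mills.
  pose proof (pow_le z 2 Hz); pose proof (pow_le z 3 Hz).
  split.
  - apply Rdiv_le_0_compat; [unfold mills_num; lra | exact Hden].
  - apply (Rdiv_le_1 _ _ Hden); unfold mills_num, mills_den; lra.
Qed.

Lemma mills_residual_nonneg (z : R) : 0 <= z -> 0 <= mills_residual z.
Proof.
  intros Hz; unfold mills_residual.
  pose proof (pow2_ge_0 (z - 7 / 5)) as Hsq.
  assert (0 <= z * (z - 7 / 5) ^ 2) by (apply Rmult_le_pos; auto).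
  assert (0 <= z ^ 2 * (z - 7 / 5) ^ 2) by (apply Rmult_le_pos; auto using pow_le).
  assert (0 <= z ^ 3 * (z - 7 / 5) ^ 2) by (apply Rmult_le_pos; auto using pow_le).
  nra.
Qed.

Lemma is_derive_gauss_mills (z : R) : 0 <= z ->
  is_derive (fun t => gauss t * mills t) z
    (gauss z * (mills_residual z / mills_den z ^ 2) - gauss z).
Proof.
  intros Hz; pose proof (mills_den_pos z Hz) as Hden.
  unfold gauss, mills, mills_num, mills_residual, mills_den in *.
  auto_derive; [lra |].
  replace (- (z * (z * 1))) with (- z ^ 2) by ring; field; lra.
Qed.

Lemma gauss_mills_le_tail (z : R) : 0 <= z -> gauss z * mills z <= gauss_tail z.
Proof.
  intros Hz.
  apply (gauss_tail_ge (fun t => gauss t * mills t)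
    (fun t => gauss t * (mills_residual t / mills_den t ^ 2) - gauss t)).
  - intros t Ht; apply is_derive_gauss_mills; lra.
  - intros t Ht; ring_simplify.
    apply Rmult_le_pos; [left; apply gauss_pos |].
    apply Rdiv_le_0_compat; [apply mills_residual_nonneg; lra |].
    apply pow_lt, mills_den_pos; lra.
  - apply (is_lim_le_le_loc (fun _ => 0) gauss); [ | apply is_lim_const | apply is_lim_gauss].
    exists 0; intros t Ht.
    pose proof (mills_bounds t (Rlt_le _ _ Ht)); pose proof (gauss_pos t).
    split; nra.
Qed.

Definition scaled_mills (a : R) : R := gauss a * mills (5 * a).

Definition scaled_mills_residual (z : R) : R :=
  -600 - 2520 * z - 11260 * z ^ 2 - 11472 * z ^ 3 + 1296 * z ^ 4 + 6936 * z ^ 5 + 2880 * z ^ 6.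

Lemma is_derive_scaled_mills (a : R) : 0 <= a ->
  is_derive scaled_mills a
    (gauss a * (scaled_mills_residual (5 * a) / mills_den (5 * a) ^ 2) - gauss a).
Proof.
  intros Ha; pose proof (mills_den_pos (5 * a) ltac:(lra)) as Hden.
  unfold scaled_mills, gauss, mills, mills_num, scaled_mills_residual, mills_den in *.
  auto_derive; [lra |].
  replace (- (a * (a * 1))) with (- a ^ 2) by ring; field; lra.
Qed.

Lemma scaled_mills_residual_nonpos (z : R) :
  0 <= z <= 269 / 200 -> scaled_mills_residual z <= 0.
Proof.
  intros Hz; unfold scaled_mills_residual.
  assert (0 <= z * (269 / 200 - z)) by nra.
  nra.
Qed.

Lemma scaled_mills_residual_nonneg (z : R) :
  271 / 200 <= z -> 0 <= scaled_mills_residual z.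
Proof.
  intros Hz; unfold scaled_mills_residual.
  (* In the variable t = z - 271/200 all coefficients are positive. *)
  set (t := z - 271 / 200).
  replace z with (t + 271 / 200) by (unfold t; ring).
  assert (Ht : 0 <= t) by (unfold t; lra).
  pose proof (pow_le t 2 Ht); pose proof (pow_le t 3 Ht); pose proof (pow_le t 4 Ht).
  pose proof (pow_le t 5 Ht); pose proof (pow_le t 6 Ht).
  ring_simplify; lra.
Qed.

Lemma mills_decr_near_root (z : R) :
  269 / 200 <= z <= 271 / 200 -> mills (271 / 200) <= mills z.
Proof.
  intros Hz; unfold mills.
  pose proof (mills_den_pos z ltac:(lra)); pose proof (mills_den_pos (271 / 200) ltac:(lra)).
  apply Rle_div_l; [lra |].
  replace (mills_num z / mills_den z * mills_den (271 / 200))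
    with (mills_num z * mills_den (271 / 200) / mills_den z) by (field; lra).
  apply Rle_div_r; [lra |].
  unfold mills_num, mills_den.
  assert (0 <= (271 / 200 - z) * z) by nra.
  assert (0 <= (271 / 200 - z) * z * z) by nra.
  assert (0 <= (271 / 200 - z) * z * z * z) by nra.
  nra.
Qed.

Lemma scaled_mills_ge_near_min (a : R) :
  269 / 1000 <= a <= 271 / 1000 -> scaled_mills (271 / 1000) <= scaled_mills a.
Proof.
  intros Ha; unfold scaled_mills.
  replace (5 * (271 / 1000)) with (271 / 200) by field.
  pose proof (mills_decr_near_root (5 * a) ltac:(lra)).
  pose proof (mills_bounds (271 / 200) ltac:(lra)).
  apply Rmult_le_compat; try lra.
  - left; apply gauss_pos.
  - unfold gauss; apply exp_le_exp; nra.
Qed.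

Lemma RInt_gauss_plus_scaled_mills_ge (c a : R) : 0 <= a ->
  RInt gauss c (269 / 1000) + scaled_mills (271 / 1000) <= RInt gauss c a + scaled_mills a.
Proof.
  intros Ha.
  set (slope t := gauss t * (scaled_mills_residual (5 * t) / mills_den (5 * t) ^ 2) - gauss t).
  assert (Hslope : forall t,
    gauss t + slope t = gauss t * (scaled_mills_residual (5 * t) / mills_den (5 * t) ^ 2)).
  { intros t; unfold slope; ring. }
  assert (Hden : forall t, 0 <= t -> 0 < mills_den (5 * t) ^ 2).
  { intros t Ht; apply pow_lt, mills_den_pos; lra. }
  pose proof (RInt_gauss_incr c (269 / 1000) (271 / 1000) ltac:(lra)).
  destruct (Rle_lt_dec a (269 / 1000)) as [Hlow | Hnot_low];
    [ | destruct (Rle_lt_dec a (271 / 1000)) as [Hmid | Hhigh]].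
  - assert (RInt gauss c (269 / 1000) + scaled_mills (269 / 1000)
              <= RInt gauss c a + scaled_mills a).
    { apply (RInt_gauss_plus_ge scaled_mills slope); [lra | | ].
      - intros t Ht; apply is_derive_scaled_mills; lra.
      - intros t Ht; rewrite Hslope.
        apply Rmult_le_0_l; [left; apply gauss_pos |].
        apply Rmult_le_0_r; [apply scaled_mills_residual_nonpos; lra |].
        left; apply Rinv_0_lt_compat, Hden; lra. }
    pose proof (scaled_mills_ge_near_min (269 / 1000) ltac:(lra)); lra.
  - pose proof (RInt_gauss_incr c (269 / 1000) a ltac:(lra)).
    pose proof (scaled_mills_ge_near_min a ltac:(lra)); lra.
  - assert (RInt gauss c (271 / 1000) + scaled_mills (271 / 1000)
              <= RInt gauss c a + scaled_mills a).
    { apply (RInt_gauss_plus_le scaled_mills slope); [lra | | ].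
      - intros t Ht; apply is_derive_scaled_mills; lra.
      - intros t Ht; rewrite Hslope.
        apply Rmult_le_pos; [left; apply gauss_pos |].
        apply Rdiv_le_0_compat; [apply scaled_mills_residual_nonneg; lra | apply Hden; lra]. }
    lra.
Qed.

Lemma exp_opp_le (y : R) : 0 <= y -> exp (- y) <= / (1 + y / 4) ^ 4.
Proof.
  intros Hy.
  replace (exp (- y)) with (exp (- (y / 4)) ^ 4)
    by (simpl; rewrite Rmult_1_r, <- !exp_plus; f_equal; field).
  rewrite <- pow_inv; apply pow_incr; split; [left; apply exp_pos |].
  rewrite exp_Ropp; apply Rinv_le_contravar; [lra | apply exp_ineq1_le].
Qed.

Lemma exp_opp_ge (y : R) : y <= 4 -> (1 - y / 4) ^ 4 <= exp (- y).
Proof.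
  intros Hy.
  replace (exp (- y)) with (exp (- (y / 4)) ^ 4)
    by (simpl; rewrite Rmult_1_r, <- !exp_plus; f_equal; field).
  apply pow_incr; split; [lra |].
  pose proof (exp_ineq1_le (- (y / 4))); lra.
Qed.

Lemma sqrt10_bounds : 3.1622776 <= sqrt 10 <= 3.1622777.
Proof.
  pose proof (sqrt_sqrt 10 ltac:(lra)); pose proof (sqrt_pos 10); split; nra.
Qed.

Lemma numeric_lower_bound :
  sqrt 10 / 12 * exp (- (1 / 10))
  <= RInt gauss (1 / sqrt 10) (269 / 1000) + scaled_mills (271 / 1000).
Proof.
  pose proof sqrt10_bounds as Hs.
  set (b := 1 / sqrt 10).
  assert (Hb : 0.3162277 <= b <= 0.316228).
  { unfold b; split;
      [apply (Rle_div_r _ _ (sqrt 10)) | apply (Rle_div_l _ _ (sqrt 10))]; lra. }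
  set (E := exp (- (269 / 1000) ^ 2)).
  assert (Hint : RInt gauss b b + - E * b <= RInt gauss b (269 / 1000) + - E * (269 / 1000)).
  { apply (RInt_gauss_plus_ge (fun t => - E * t) (fun _ => - E)); [lra | | ].
    - intros t _; auto_derive; [easy | ring].
    - intros t Ht; enough (gauss t <= E) by lra.
      apply exp_le_exp; nra. }
  rewrite RInt_point in Hint; unfold zero in Hint; simpl in Hint.
  assert (HE : E <= / (1 + (269 / 1000) ^ 2 / 4) ^ 4) by (apply exp_opp_le; nra).
  assert (Hg : (1 - (271 / 1000) ^ 2 / 4) ^ 4 <= gauss (271 / 1000)) by (apply exp_opp_ge; nra).
  assert (Hm : 0.30699 <= mills (271 / 200)).
  { unfold mills; apply (Rle_div_r _ _ (mills_den (271 / 200)));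
      unfold mills_num, mills_den; lra. }
  assert (He : exp (- (1 / 10)) <= / (1 + (1 / 10) / 4) ^ 4) by (apply exp_opp_le; lra).
  unfold scaled_mills; replace (5 * (271 / 1000)) with (271 / 200) by field.
  assert (0.92855 * 0.30699 <= gauss (271 / 1000) * mills (271 / 200)).
  { apply Rmult_le_compat; lra. }
  assert (sqrt 10 * exp (- (1 / 10)) <= 3.1622777 * / (1 + (1 / 10) / 4) ^ 4).
  { apply Rmult_le_compat; try lra; left; apply exp_pos. }
  assert ((b - 269 / 1000) * E
          <= (0.316228 - 269 / 1000) * / (1 + (269 / 1000) ^ 2 / 4) ^ 4).
  { apply Rmult_le_compat; try lra; left; apply exp_pos. }
  lra.
Qed.

Lemma scaled_mills_le_tail (a : R) : 0 <= a ->
  scaled_mills a <= exp (24 * a ^ 2) * gauss_tail (5 * a).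
Proof.
  intros Ha; unfold scaled_mills.
  replace (gauss a) with (exp (24 * a ^ 2) * gauss (5 * a))
    by (unfold gauss; rewrite <- exp_plus; f_equal; ring).
  rewrite Rmult_assoc; apply Rmult_le_compat_l; [left; apply exp_pos |].
  apply gauss_mills_le_tail; lra.
Qed.

Lemma ex_RInt_exp_half_sq (a b : R) : ex_RInt (fun v => exp (- v ^ 2 / 2)) a b.
Proof.
  apply (ex_RInt_continuous (V := R_CompleteNormedModule)); intros v _.
  apply (ex_derive_continuous (K := R_AbsRing) (V := R_NormedModule)); auto_derive; easy.
Qed.

Lemma RInt_exp_half_sq (c y : R) :
  RInt (fun v => exp (- v ^ 2 / 2)) c y
  = sqrt 2 * RInt gauss (- (y / sqrt 2)) (- (c / sqrt 2)).
Proof.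
  assert (Hs : 0 < sqrt 2) by (apply sqrt_lt_R0; lra).
  assert (Hs2 : sqrt 2 ^ 2 = 2) by (simpl; rewrite Rmult_1_r; apply sqrt_sqrt; lra).
  rewrite RInt_gauss_opp.
  pose proof (RInt_comp_lin (V := R_CompleteNormedModule) gauss (/ sqrt 2) 0 c y
    (ex_RInt_gauss _ _)) as Hlin.
  replace (/ sqrt 2 * c + 0) with (c / sqrt 2) in Hlin by (field; lra).
  replace (/ sqrt 2 * y + 0) with (y / sqrt 2) in Hlin by (field; lra).
  rewrite <- Hlin.
  rewrite (RInt_ext (V := R_CompleteNormedModule)
    (fun v => scal (/ sqrt 2) (gauss (/ sqrt 2 * v + 0)))
    (fun v => scal (/ sqrt 2) (exp (- v ^ 2 / 2)))).
  - rewrite (RInt_scal (V := R_CompleteNormedModule)) by apply ex_RInt_exp_half_sq.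
    unfold scal; simpl; unfold mult; simpl.
    rewrite <- Rmult_assoc, Rinv_r by lra; symmetry; apply Rmult_1_l.
  - intros v _; unfold gauss; do 2 f_equal.
    replace ((/ sqrt 2 * v + 0) ^ 2) with (v ^ 2 / sqrt 2 ^ 2) by (field; lra).
    rewrite Hs2; field.
Qed.

Lemma Ncdf_gauss_tail (y : R) : Ncdf y = gauss_tail (- (y / sqrt 2)) / sqrt PI.
Proof.
  assert (Hs : 0 < sqrt 2) by (apply sqrt_lt_R0; lra).
  assert (Hpi : 0 < sqrt PI) by (apply sqrt_lt_R0, PI_RGT_0).
  assert (Hgen : is_RInt_gen (fun v => exp (- v ^ 2 / 2)) (Rbar_locally m_infty) (at_point y)
                   (sqrt 2 * gauss_tail (- (y / sqrt 2)))).
  { apply is_RInt_gen_minfty_at_point; [intros; apply ex_RInt_exp_half_sq |].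
    apply (is_lim_ext (fun c => sqrt 2 * RInt gauss (- (y / sqrt 2)) (- (c / sqrt 2))));
      [intros c; symmetry; apply RInt_exp_half_sq |].
    apply (is_lim_scal_l _ (sqrt 2) m_infty (gauss_tail (- (y / sqrt 2)))).
    apply (is_lim_comp (fun B => RInt gauss (- (y / sqrt 2)) B) (fun c => - (c / sqrt 2))
             m_infty _ p_infty).
    - apply is_lim_RInt_gauss.
    - apply is_lim_spec; intros M; exists (- (sqrt 2 * M)); intros c Hc.
      apply (Rmult_lt_reg_l (sqrt 2)); [exact Hs |].
      replace (sqrt 2 * - (c / sqrt 2)) with (- c) by (field; lra); lra.
    - exists 0; intros; discriminate. }
  unfold Ncdf; rewrite (is_RInt_gen_unique (V := R_CompleteNormedModule) _ _ Hgen).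
  rewrite sqrt_mult by (lra || (left; apply PI_RGT_0)).
  field; lra.
Qed.

Theorem lemma3p1 (x : R) (hx : 0 <= x) :
  f3 x >= Ncdf (1 / sqrt 5) + 1 / 12 * sqrt (10 / PI) * exp (- (1 / 10)).
Proof.
  assert (Hs2 : 0 < sqrt 2) by (apply sqrt_lt_R0; lra).
  assert (Hs5 : 0 < sqrt 5) by (apply sqrt_lt_R0; lra).
  assert (Hpi : 0 < sqrt PI) by (apply sqrt_lt_R0, PI_RGT_0).
  set (a := x / (2 * sqrt 2)).
  assert (Ha : 0 <= a) by (apply Rdiv_le_0_compat; lra).
  assert (Hx2 : 3 * x ^ 2 = 24 * a ^ 2).
  { replace x with (2 * sqrt 2 * a) by (unfold a; field; lra).
    replace (3 * (2 * sqrt 2 * a) ^ 2) with (12 * (sqrt 2 * sqrt 2) * a ^ 2) by ring.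
    rewrite sqrt_sqrt by lra; ring. }
  assert (Hb : 1 / sqrt 5 / sqrt 2 = 1 / sqrt 10).
  { replace 10 with (5 * 2) by ring; rewrite sqrt_mult by lra; field; lra. }
  assert (Hdiff : f3 x - (Ncdf (1 / sqrt 5) + 1 / 12 * sqrt (10 / PI) * exp (- (1 / 10)))
    = (RInt gauss (1 / sqrt 10) a + exp (24 * a ^ 2) * gauss_tail (5 * a)
       - sqrt 10 / 12 * exp (- (1 / 10))) / sqrt PI).
  { unfold f3; rewrite !Erfc_gauss_tail, Ncdf_gauss_tail, Hb, sqrt_div_alt, <- Hx2
      by apply PI_RGT_0.
    replace (- x / (2 * sqrt 2)) with (- a) by (unfold a; field; lra).
    replace (5 * x / (2 * sqrt 2)) with (5 * a) by (unfold a; field; lra).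
    rewrite (gauss_tail_Chasles (- a) (- (1 / sqrt 10))), RInt_gauss_opp.
    field; lra. }
  pose proof (scaled_mills_le_tail a Ha) as Htail.
  pose proof (RInt_gauss_plus_scaled_mills_ge (1 / sqrt 10) a Ha) as Hmin.
  pose proof numeric_lower_bound as Hnum.
  apply Rminus_ge; rewrite Hdiff; apply Rle_ge, Rdiv_le_0_compat; lra.
Qed.
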